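(* Consider the problem described in the context and let $\mathbf{x}_0=(x_0,y_0)\notin\Omega_{\rm capture}$. Let $T_{\min}(\mathbf{x}_0)=\arg\min_{T>0} d_f^*(T,\mathbf{x}_0)$. Then $$T_{\min}(\mathbf{x}_0)=\begin{cases}x_0-\frac{\mu}{\sqrt{1-\mu^2}}y_0, & \text{if } x_0-\frac{\mu}{\sqrt{1-\mu^2}}y_0>0,\\ 0, & \text{otherwise},\end{cases}$$ and consequently $$d_f^*(T_{\min},\mathbf{x}_0)=\begin{cases}\mu x_0+\sqrt{1-\mu^2}\,y_0, & \text{if } T_{\min}(\mathbf{x}_0)>0,\\ \|\mathbf{x}_0\|, & \text{otherwise}.\end{cases}$$
   Context: Pursuer-fixed frame: the Evader's relative position $\mathbf{x}(t)=(x(t),y(t))\in\mathbb{R}^2$ evolves as $\dot x=\mu\cos\psi(t)-1$, $\dot y=\mu\sin\psi(t)$, $\mathbf{x}(0)=\mathbf{x}_0$, $\|\mathbf{x}_0\|>1$, $\mu\in(0,1)$, $\psi(t)$ the Evader's heading. The constraint is $\|\mathbf{x}(t)\|\ge1$ on $[0,T]$. For a final time $T$, $d_f^*(T,\mathbf{x}_0)$ denotes the maximal final distance $\|\mathbf{x}(T)\|$ achievable by the Evader subject to the constraint (its best response). For $T>0$, $\Omega(T)$ is the set of $\mathbf{x}_0$ with $(x_0-T)^2+y_0^2<(1-\mu T)^2$, $\mu x_0+\sqrt{1-\mu^2}y_0<1$ and $x_0>\mu$, and $\Omega_{\rm capture}=\bigcup_{T\ge0}\Omega(T)$ (the set of initial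 positions from which, for some final time, capture, i.e. entering $\|\mathbf{x}\|<1$, is unavoidable). The paper assumes $y\ge0$ throughout. *)

From Stdlib Require Import Reals Lra.
From Coquelicot Require Import Coquelicot.
Open Scope R_scope.

Definition norm2 (p : R * R) : R := sqrt (fst p ^ 2 + snd p ^ 2).

(* Trajectory of the Evader's relative position in the pursuer-fixed frame
   under heading psi:  x(t) = x0 + int_0^t (mu cos psi - 1, mu sin psi). *)
Definition traj (mu : R) (psi : R -> R) (x0 y0 t : R) : R * R :=
  (x0 - t + mu * RInt (fun s => cos (psi s)) 0 t,
   y0 + mu * RInt (fun s => sin (psi s)) 0 t).

Definition admissible (mu T : R) (psi : R -> R) (x0 y0 : R) : Prop :=
  ex_RInt (fun s => cos (psi s)) 0 T /\
  ex_RInt (fun s => sin (psi s)) 0 T /\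
  forall t, 0 <= t <= T -> 1 <= norm2 (traj mu psi x0 y0 t).

Definition dfstar (mu T x0 y0 : R) : Rbar :=
  Lub_Rbar (fun d => exists psi, admissible mu T psi x0 y0 /\
                                 d = norm2 (traj mu psi x0 y0 T)).

Definition Omega (mu T x0 y0 : R) : Prop :=
  (x0 - T) ^ 2 + y0 ^ 2 < (1 - mu * T) ^ 2 /\
  mu * x0 + sqrt (1 - mu ^ 2) * y0 < 1 /\
  x0 > mu.

Definition Omega_capture (mu x0 y0 : R) : Prop :=
  exists T, 0 <= T /\ Omega mu T x0 y0.

Definition Tmin (mu x0 y0 : R) : R :=
  let s := x0 - mu / sqrt (1 - mu ^ 2) * y0 in
  if Rlt_dec 0 s then s else 0.

(* Every admissible heading satisfies x(T) = (x0 - T, y0) + mu * v with |v| <= T, so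
   d_f^*(T) <= |(x0 - T, y0)| + mu T.  Conversely, for a unit vector u with u_x <= mu,
   the constant heading u gives u . x(t) = u . x0 + t (mu - u_x), which never decreases;
   if u . x0 >= 1 this heading is admissible for every T and ends at distance >= u . x0.
   Take u = (mu, sqrt (1 - mu^2)) when T_min > 0 (then u . x0 >= 1 is exactly the
   non-capture hypothesis) and u = x0 / |x0| otherwise: in both cases the upper bound at
   T = T_min equals u . x0, so u . x0 is both the value at T_min and a lower bound for
   every T. *)
From Stdlib Require Import Reals Lra Psatz.
From Coquelicot Require Import Coquelicot.
Open Scope R_scope.

Lemma norm2_ge0 p : 0 <= norm2 p.
Proof. apply sqrt_pos. Qed.

(* [norm2] is convertible to Coquelicot's [Cmod]. *)
Lemma norm2_sqr a b : norm2 (a, b) ^ 2 = a ^ 2 + b ^ 2.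
Proof. exact (Cmod2_alt (a, b)). Qed.

Lemma norm2_triangle a b c d : norm2 (a + c, b + d) <= norm2 (a, b) + norm2 (c, d).
Proof. exact (Cmod_triangle (a, b) (c, d)). Qed.

Lemma norm2_scale m a b : 0 <= m -> norm2 (m * a, m * b) = m * norm2 (a, b).
Proof.
  intro Hm. unfold norm2; cbn [fst snd].
  replace ((m * a) ^ 2 + (m * b) ^ 2) with (m ^ 2 * (a ^ 2 + b ^ 2)) by ring.
  rewrite sqrt_mult_alt by apply pow2_ge_0.
  now rewrite sqrt_pow2.
Qed.

Lemma dot_le_norm2 a b c d : a * c + b * d <= norm2 (a, b) * norm2 (c, d).
Proof. unfold norm2; cbn [fst snd]. rewrite <- !Rsqr_pow2. apply sqrt_cauchy. Qed.

Lemma norm2_unit c d : c ^ 2 + d ^ 2 = 1 -> norm2 (c, d) = 1.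
Proof. intro H. unfold norm2; cbn [fst snd]. rewrite H. apply sqrt_1. Qed.

Lemma norm2_cos_sin w : norm2 (cos w, sin w) = 1.
Proof. apply norm2_unit. pose proof (sin2_cos2 w). unfold Rsqr in *. lra. Qed.

Lemma RInt_heading_norm_le psi T :
  0 <= T ->
  ex_RInt (fun s => cos (psi s)) 0 T -> ex_RInt (fun s => sin (psi s)) 0 T ->
  norm2 (RInt (fun s => cos (psi s)) 0 T, RInt (fun s => sin (psi s)) 0 T) <= T.
Proof.
  intros HT Hc Hs.
  set (a := RInt (fun s => cos (psi s)) 0 T).
  set (b := RInt (fun s => sin (psi s)) 0 T).
  set (L := norm2 (a, b)).
  assert (Hac : ex_RInt (fun s => a * cos (psi s)) 0 T)
    by exact (ex_RInt_scal (fun s => cos (psi s)) 0 T a Hc).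
  assert (Hbs : ex_RInt (fun s => b * sin (psi s)) 0 T)
    by exact (ex_RInt_scal (fun s => sin (psi s)) 0 T b Hs).
  (* |v|^2 = v . v = int_0^T v . (cos psi, sin psi) <= T |v| *)
  assert (HL : L ^ 2 = RInt (fun s => a * cos (psi s) + b * sin (psi s)) 0 T).
  { unfold L. rewrite norm2_sqr.
    rewrite (RInt_plus (fun s => a * cos (psi s)) (fun s => b * sin (psi s))) by assumption.
    rewrite (RInt_scal (fun s => cos (psi s))) by exact Hc.
    rewrite (RInt_scal (fun s => sin (psi s))) by exact Hs.
    unfold scal, plus; simpl; unfold mult; simpl. fold a b. ring. }
  assert (HLT : L ^ 2 <= T * L).
  { rewrite HL.
    apply Rle_trans with (RInt (fun _ => L) 0 T).
    - apply RInt_le; auto.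
      + exact (ex_RInt_plus (V := R_NormedModule) _ _ _ _ Hac Hbs).
      + apply ex_RInt_const.
      + intros s _. rewrite <- (Rmult_1_r L), <- (norm2_cos_sin (psi s)).
        apply dot_le_norm2.
    - rewrite RInt_const. unfold scal; simpl; unfold mult; simpl. lra. }
  pose proof (norm2_ge0 (a, b)) as HL0. fold L in HL0. nra.
Qed.

Lemma traj_final_le mu T psi x0 y0 :
  0 <= mu -> 0 <= T -> admissible mu T psi x0 y0 ->
  norm2 (traj mu psi x0 y0 T) <= norm2 (x0 - T, y0) + mu * T.
Proof.
  intros Hmu HT [Hc [Hs _]]. unfold traj.
  eapply Rle_trans; [apply norm2_triangle|].
  rewrite norm2_scale by exact Hmu.
  apply Rplus_le_compat_l, Rmult_le_compat_l; [exact Hmu|].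
  now apply RInt_heading_norm_le.
Qed.

Lemma traj_const mu w x0 y0 t :
  traj mu (fun _ => w) x0 y0 t = (x0 - t + mu * (t * cos w), y0 + mu * (t * sin w)).
Proof.
  unfold traj. rewrite !RInt_const. unfold scal; simpl; unfold mult; simpl.
  f_equal; f_equal; f_equal; ring.
Qed.

Lemma traj_const_norm_ge mu w x0 y0 t :
  cos w <= mu -> 0 <= t ->
  cos w * x0 + sin w * y0 <= norm2 (traj mu (fun _ => w) x0 y0 t).
Proof.
  intros Hw Ht. rewrite traj_const.
  rewrite <- (Rmult_1_l (norm2 _)), <- (norm2_cos_sin w).
  eapply Rle_trans; [|apply dot_le_norm2].
  pose proof (sin2_cos2 w) as Hsc. unfold Rsqr in Hsc.
  assert (0 <= t * (mu - cos w)) by nra.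
  replace (cos w * (x0 - t + mu * (t * cos w)) + sin w * (y0 + mu * (t * sin w)))
    with (cos w * x0 + sin w * y0 + t * (mu - cos w) + mu * t * (sin w * sin w + cos w * cos w - 1))
    by ring.
  rewrite Hsc. lra.
Qed.

Lemma traj_const_admissible mu T w x0 y0 :
  cos w <= mu -> 1 <= cos w * x0 + sin w * y0 -> admissible mu T (fun _ => w) x0 y0.
Proof.
  intros Hw H1. split; [apply ex_RInt_const|split; [apply ex_RInt_const|]].
  intros t Ht. eapply Rle_trans; [exact H1|]. apply traj_const_norm_ge; lra.
Qed.

Lemma dfstar_ge mu T psi x0 y0 :
  admissible mu T psi x0 y0 -> Rbar_le (norm2 (traj mu psi x0 y0 T)) (dfstar mu T x0 y0).
Proof. intro H. apply (Lub_Rbar_correct _). exists psi; auto. Qed.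

Lemma dfstar_le mu T x0 y0 (M : R) :
  (forall psi, admissible mu T psi x0 y0 -> norm2 (traj mu psi x0 y0 T) <= M) ->
  Rbar_le (dfstar mu T x0 y0) M.
Proof. intro H. apply (Lub_Rbar_correct _). intros d [psi [Hpsi ->]]. exact (H psi Hpsi). Qed.

Lemma heading_of_unit c d : c ^ 2 + d ^ 2 = 1 -> 0 <= d -> exists w, cos w = c /\ sin w = d.
Proof.
  intros H Hd. assert (Hc : -1 <= c <= 1) by nra.
  exists (acos c). split; [now apply cos_acos|].
  rewrite sin_acos by exact Hc. rewrite Rsqr_pow2.
  replace (1 - c ^ 2) with (d ^ 2) by lra. now apply sqrt_pow2.
Qed.

Lemma dfstar_minimum mu T0 c d x0 y0 :
  0 <= mu -> 0 <= T0 -> c ^ 2 + d ^ 2 = 1 -> 0 <= d -> c <= mu -> 1 <= c * x0 + d * y0 ->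
  norm2 (x0 - T0, y0) + mu * T0 <= c * x0 + d * y0 ->
  (forall T, 0 <= T -> Rbar_le (c * x0 + d * y0) (dfstar mu T x0 y0)) /\
  dfstar mu T0 x0 y0 = Finite (c * x0 + d * y0).
Proof.
  intros Hmu HT0 Hcd Hd Hc H1 Hup.
  destruct (heading_of_unit c d Hcd Hd) as [w [Hcw Hsw]]; subst c d.
  assert (Hlow : forall T, 0 <= T -> Rbar_le (cos w * x0 + sin w * y0) (dfstar mu T x0 y0)).
  { intros T HT. eapply Rbar_le_trans;
      [|apply dfstar_ge, (traj_const_admissible mu T w x0 y0 Hc H1)].
    now apply traj_const_norm_ge. }
  split; [exact Hlow|].
  apply Rbar_le_antisym; [|now apply Hlow].
  apply dfstar_le. intros psi Hpsi.
  eapply Rle_trans; [now apply traj_final_le|exact Hup].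
Qed.

Lemma capture_of_support_lt_1 mu x0 y0 :
  0 < mu < 1 -> 0 <= y0 -> mu < x0 -> mu * x0 + sqrt (1 - mu ^ 2) * y0 < 1 ->
  Omega_capture mu x0 y0.
Proof.
  intros Hmu Hy0 Hx0 Hsupp.
  assert (Hk2 : sqrt (1 - mu ^ 2) ^ 2 = 1 - mu ^ 2) by (apply pow2_sqrt; nra).
  assert (Hky : 0 <= sqrt (1 - mu ^ 2) * y0) by (apply Rmult_le_pos; [apply sqrt_pos|lra]).
  assert (Hm2 : 0 < 1 - mu ^ 2) by nra.
  set (T := (x0 - mu) / (1 - mu ^ 2)).
  exists T. split; [unfold T; apply Rdiv_le_0_compat; lra|].
  split; [|split; [exact Hsupp|exact Hx0]].
  (* T minimises (x0 - T)^2 + y0^2 - (1 - mu T)^2 *)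
  assert (Hid : (1 - mu ^ 2) * ((x0 - T) ^ 2 + y0 ^ 2 - (1 - mu * T) ^ 2)
                = (sqrt (1 - mu ^ 2) * y0) ^ 2 - (1 - mu * x0) ^ 2)
    by (rewrite Rpow_mult_distr, Hk2; unfold T; field; lra).
  nra.
Qed.

Lemma support_ge_1_of_not_capture mu x0 y0 :
  0 < mu < 1 -> 0 <= y0 -> 1 < norm2 (x0, y0) -> ~ Omega_capture mu x0 y0 ->
  0 < x0 - mu / sqrt (1 - mu ^ 2) * y0 ->
  1 <= mu * x0 + sqrt (1 - mu ^ 2) * y0.
Proof.
  intros Hmu Hy0 Hr Hnc Hs.
  set (k := sqrt (1 - mu ^ 2)) in *.
  assert (Hk2 : k * k = 1 - mu ^ 2) by (apply sqrt_sqrt; nra).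
  assert (Hk0 : 0 < k) by (apply sqrt_lt_R0; nra).
  assert (Hks : mu * y0 < k * x0).
  { pose proof (Rmult_lt_0_compat _ _ Hk0 Hs).
    replace (k * (x0 - mu / k * y0)) with (k * x0 - mu * y0) in H by (field; lra). lra. }
  destruct (Rle_or_lt 1 (mu * x0 + k * y0)) as [|Hlt]; [assumption|exfalso].
  destruct (Rle_or_lt x0 mu) as [Hxm|Hxm].
  - (* then 0 < x0 <= mu and 0 <= y0 < k: (x0, y0) would lie in the unit disc *)
    assert (Hr2 : 1 < x0 ^ 2 + y0 ^ 2).
    { rewrite <- norm2_sqr. pose proof (norm2_ge0 (x0, y0)). nra. }
    assert (0 < x0) by nra.
    assert (y0 < k) by nra.
    nra.
  - exact (Hnc (capture_of_support_lt_1 mu x0 y0 Hmu Hy0 Hxm Hlt)).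
Qed.

Lemma upper_bound_at_tangent_time mu k x0 y0 :
  0 < k -> mu ^ 2 + k ^ 2 = 1 -> 0 <= y0 ->
  norm2 (x0 - (x0 - mu / k * y0), y0) + mu * (x0 - mu / k * y0) = mu * x0 + k * y0.
Proof.
  intros Hk Hone Hy0.
  replace (x0 - (x0 - mu / k * y0), y0) with (y0 / k * mu, y0 / k * k) by (f_equal; field; lra).
  rewrite norm2_scale, norm2_unit by (try apply Rdiv_le_0_compat; lra).
  replace (k * y0) with (k ^ 2 * y0 / k) by (field; lra).
  replace (k ^ 2) with (1 - mu ^ 2) by lra.
  field; lra.
Qed.

Lemma unit_direction_norm2 a b :
  0 < norm2 (a, b) ->
  (a / norm2 (a, b)) ^ 2 + (b / norm2 (a, b)) ^ 2 = 1 /\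
  a / norm2 (a, b) * a + b / norm2 (a, b) * b = norm2 (a, b).
Proof.
  intro Hr. pose proof (norm2_sqr a b) as Hr2.
  set (r := norm2 (a, b)) in *.
  split.
  - replace ((a / r) ^ 2 + (b / r) ^ 2) with ((a ^ 2 + b ^ 2) / r ^ 2) by (field; lra).
    rewrite <- Hr2. field; lra.
  - replace (a / r * a + b / r * b) with ((a ^ 2 + b ^ 2) / r) by (field; lra).
    rewrite <- Hr2. field; lra.
Qed.

Lemma x0_div_norm2_le_mu mu x0 y0 :
  0 < mu < 1 -> 0 < norm2 (x0, y0) -> x0 - mu / sqrt (1 - mu ^ 2) * y0 <= 0 ->
  x0 / norm2 (x0, y0) <= mu.
Proof.
  intros Hmu Hr Hs.
  set (k := sqrt (1 - mu ^ 2)) in *.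
  assert (Hk2 : k ^ 2 = 1 - mu ^ 2) by (apply pow2_sqrt; nra).
  assert (Hk0 : 0 < k) by (apply sqrt_lt_R0; nra).
  pose proof (norm2_sqr x0 y0) as Hr2.
  apply (Rmult_le_reg_r (norm2 (x0, y0))); [exact Hr|].
  replace (x0 / norm2 (x0, y0) * norm2 (x0, y0)) with x0 by (field; lra).
  destruct (Rle_or_lt x0 0); [nra|].
  assert (Hks : k * x0 <= mu * y0).
  { pose proof (Rmult_le_compat_l k _ 0 (Rlt_le _ _ Hk0) Hs).
    replace (k * (x0 - mu / k * y0)) with (k * x0 - mu * y0) in H0 by (field; lra). lra. }
  assert (Hsq : (k * x0) ^ 2 <= (mu * y0) ^ 2)
    by (apply pow_incr; split; [apply Rmult_le_pos|]; lra).
  rewrite !Rpow_mult_distr, Hk2 in Hsq.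
  apply Rsqr_incr_0_var; [|apply Rmult_le_pos; lra].
  rewrite !Rsqr_pow2, Rpow_mult_distr, Hr2. nra.
Qed.

Theorem lemma7 (mu x0 y0 : R) (Hmu : 0 < mu < 1) (Hy0 : 0 <= y0)
  (Hx0 : 1 < norm2 (x0, y0)) (Hnc : ~ Omega_capture mu x0 y0) :
  (forall T, 0 <= T -> Rbar_le (dfstar mu (Tmin mu x0 y0) x0 y0) (dfstar mu T x0 y0)) /\
  dfstar mu (Tmin mu x0 y0) x0 y0 =
    Finite (if Rlt_dec 0 (Tmin mu x0 y0)
            then mu * x0 + sqrt (1 - mu ^ 2) * y0
            else norm2 (x0, y0)).
Proof.
  assert (Hmu0 : 0 <= mu) by lra.
  assert (Hk2 : mu ^ 2 + sqrt (1 - mu ^ 2) ^ 2 = 1) by (rewrite pow2_sqrt; nra).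
  assert (Hk0 : 0 < sqrt (1 - mu ^ 2)) by (apply sqrt_lt_R0; nra).
  unfold Tmin; cbv zeta.
  destruct (Rlt_dec 0 (x0 - mu / sqrt (1 - mu ^ 2) * y0)) as [Hs|Hs].
  - destruct (dfstar_minimum mu _ mu _ x0 y0 Hmu0 (Rlt_le _ _ Hs) Hk2 (Rlt_le _ _ Hk0)
                (Rle_refl mu) (support_ge_1_of_not_capture mu x0 y0 Hmu Hy0 Hx0 Hnc Hs)
                (Req_le _ _ (upper_bound_at_tangent_time mu _ x0 y0 Hk0 Hk2 Hy0)))
      as [Hlow Heq].
    rewrite Heq. destruct Rlt_dec; [|contradiction].
    split; [exact Hlow|reflexivity].
  - assert (Hr : 0 < norm2 (x0, y0)) by lra.
    destruct (unit_direction_norm2 x0 y0 Hr) as [Hunit Hdot].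
    assert (Hup : norm2 (x0 - 0, y0) + mu * 0 <= x0 / norm2 (x0, y0) * x0 + y0 / norm2 (x0, y0) * y0)
      by (rewrite Hdot, Rminus_0_r; lra).
    destruct (dfstar_minimum mu 0 _ _ x0 y0 Hmu0 (Rle_refl 0) Hunit
                (Rdiv_le_0_compat _ _ Hy0 Hr)
                (x0_div_norm2_le_mu mu x0 y0 Hmu Hr (Rnot_lt_le _ _ Hs)) ltac:(lra) Hup)
      as [Hlow Heq].
    rewrite Hdot in Hlow, Heq. rewrite Heq.
    destruct Rlt_dec; [lra|].
    split; [exact Hlow|reflexivity].
Qed.
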